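(* Let $f$ and $g$ be transcendental entire functions with $f\circ g=g\circ f$, and suppose there is a polynomial $P$ of degree at least $2$ such that $P\circ f=f\circ g$. If $U\subset BU(f)$, then $g^{-1}(U)\subset BU(f)$.
   Context: For an entire function $f$, $f^n$ denotes the $n$-th iterate. The escaping set is $I(f)=\{z\in\mathbb{C}: f^n(z)\to\infty \text{ as } n\to\infty\}$, $K(f)=\{z\in\mathbb{C}: \exists R>0,\ |f^n(z)|\le R \text{ for all } n\ge 0\}$, and the Bungee set is $BU(f)=\mathbb{C}\setminus (I(f)\cup K(f))$. $g^{-1}(U)$ denotes the full preimage $\{z: g(z)\in U\}$. *)

From Stdlib Require Import Reals List.
From Coquelicot Require Import Coquelicot.
Open Scope R_scope.

Definition entire (f : C -> C) : Prop :=
  forall z : C, @ex_derive C_AbsRing C_NormedModule f z.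

(* evaluation of the polynomial with coefficients l = [a0; a1; ...; an] *)
Definition peval (l : list C) (z : C) : C :=
  fold_right (fun a acc => Cplus a (Cmult z acc)) (RtoC 0) l.

Definition is_polynomial (f : C -> C) : Prop :=
  exists l : list C, forall z, f z = peval l z.

Definition transcendental_entire (f : C -> C) : Prop :=
  entire f /\ ~ is_polynomial f.

Definition poly_deg_ge2 (P : C -> C) : Prop :=
  exists l : list C, (3 <= length l)%nat /\ last l (RtoC 0) <> RtoC 0 /\
    forall z, P z = peval l z.

Definition iter (f : C -> C) (n : nat) (z : C) : C := Nat.iter n f z.

Definition escaping (f : C -> C) (z : C) : Prop :=
  forall M : R, exists N : nat, forall n : nat, (N <= n)%nat -> M < Cmod (iter f n z).

Definition bounded_orbit (f : C -> C) (z : C) : Prop :=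
  exists R0 : R, 0 < R0 /\ forall n : nat, Cmod (iter f n z) <= R0.

Definition bungee (f : C -> C) (z : C) : Prop :=
  ~ escaping f z /\ ~ bounded_orbit f z.

(* Since f and g commute and P o f = f o g, the f-orbit of g z is,
   from the first step on, the image under P of the f-orbit of z:
       f^(n+1) (g z) = f (g (f^n z)) = P (f^(n+1) z).
   A polynomial of degree at least 1 is bounded on bounded sets and tends to
   infinity at infinity.  Hence if the orbit of z escapes (resp. stays bounded),
   so does the orbit of g z.  Taking contrapositives, if g z lies in BU(f) then
   the orbit of z neither escapes nor stays bounded, i.e. z lies in BU(f). *)
From Stdlib Require Import Reals List Lra Lia.
From Coquelicot Require Import Coquelicot.
Open Scope R_scope.

Lemma peval_cons (a : C) (l : list C) (w : C) :
  peval (a :: l) w = Cplus a (Cmult w (peval l w)).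
Proof. reflexivity. Qed.

Lemma Cmod_plus_ge (a b : C) : Cmod b - Cmod a <= Cmod (Cplus a b).
Proof.
  assert (Hb : b = Cplus (Cplus a b) (Copp a)) by ring.
  pose proof (Cmod_triangle (Cplus a b) (Copp a)) as Htri.
  rewrite <- Hb, Cmod_opp in Htri. lra.
Qed.

Lemma peval_bounded (l : list C) (R0 : R) :
  0 <= R0 -> exists B, forall w, Cmod w <= R0 -> Cmod (peval l w) <= B.
Proof.
  intros HR0. induction l as [|a l [B IH]].
  - exists 0. intros w _. simpl. rewrite Cmod_0. lra.
  - exists (Cmod a + R0 * Rmax 0 B). intros w Hw. rewrite peval_cons.
    eapply Rle_trans; [apply Cmod_triangle|]. rewrite Cmod_mult.
    assert (Hq : Cmod (peval l w) <= Rmax 0 B)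
      by (eapply Rle_trans; [apply IH, Hw|apply Rmax_r]).
    assert (Cmod w * Cmod (peval l w) <= R0 * Rmax 0 B)
      by (apply Rmult_le_compat; auto using Cmod_ge_0).
    lra.
Qed.

Lemma affine_step_grows (a : C) (q : C -> C) (c K : R) :
  0 < c -> (forall w, K <= Cmod w -> c <= Cmod (q w)) ->
  forall M, exists K', forall w, K' <= Cmod w -> M <= Cmod (Cplus a (Cmult w (q w))).
Proof.
  intros Hc Hq M. exists (Rmax K ((Cmod a + M) / c)). intros w Hw.
  eapply Rle_trans; [|apply Cmod_plus_ge]. rewrite Cmod_mult.
  assert (HK : K <= Cmod w) by (eapply Rle_trans; [apply Rmax_l|exact Hw]).
  assert (Hlarge : (Cmod a + M) / c <= Cmod w)
    by (eapply Rle_trans; [apply Rmax_r|exact Hw]).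
  assert (Hlarge' : Cmod a + M <= Cmod w * c).
  { apply (Rmult_le_compat_r c) in Hlarge; [|lra].
    unfold Rdiv in Hlarge. rewrite Rmult_assoc, Rinv_l, Rmult_1_r in Hlarge; lra. }
  assert (Cmod w * c <= Cmod w * Cmod (q w))
    by (apply Rmult_le_compat_l; [apply Cmod_ge_0|apply Hq, HK]).
  lra.
Qed.

Lemma peval_away_from_zero (l : list C) :
  last l (RtoC 0) <> RtoC 0 ->
  exists c K, 0 < c /\ forall w, K <= Cmod w -> c <= Cmod (peval l w).
Proof.
  induction l as [|a [|b l] IH]; intros Hlast.
  - simpl in Hlast. congruence.
  - exists (Cmod a), 0. split; [apply Cmod_gt_0, Hlast|].
    intros w _. rewrite peval_cons. simpl.
    replace (Cplus a (Cmult w (RtoC 0))) with a by ring. lra.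
  - destruct (IH Hlast) as [c [K [Hc Hq]]].
    destruct (affine_step_grows a _ c K Hc Hq 1) as [K' HK'].
    exists 1, K'. split; [lra|]. exact HK'.
Qed.

Lemma peval_tends_to_infinity (l : list C) :
  (2 <= length l)%nat -> last l (RtoC 0) <> RtoC 0 ->
  forall M, exists K, forall w, K <= Cmod w -> M <= Cmod (peval l w).
Proof.
  intros Hlen Hlast. destruct l as [|a [|b l]]; simpl in Hlen; try lia.
  destruct (peval_away_from_zero (b :: l) Hlast) as [c [K [Hc Hq]]].
  exact (affine_step_grows a _ c K Hc Hq).
Qed.

Lemma escaping_transfer (f h : C -> C) (z w : C) :
  (forall n, iter f (S n) w = h (iter f (S n) z)) ->
  (forall M, exists K, forall u, K <= Cmod u -> M <= Cmod (h u)) ->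
  escaping f z -> escaping f w.
Proof.
  intros Horb Hh Hesc M.
  destruct (Hh (M + 1)) as [K HK]. destruct (Hesc K) as [N HN].
  exists (S N). intros [|m] Hm; [lia|].
  rewrite Horb.
  assert (Hfar : K <= Cmod (iter f (S m) z)) by (left; apply HN; lia).
  specialize (HK _ Hfar). lra.
Qed.

Lemma bounded_orbit_transfer (f h : C -> C) (z w : C) :
  (forall n, iter f (S n) w = h (iter f (S n) z)) ->
  (forall R0, 0 <= R0 -> exists B, forall u, Cmod u <= R0 -> Cmod (h u) <= B) ->
  bounded_orbit f z -> bounded_orbit f w.
Proof.
  intros Horb Hh [R0 [HR0 Hbd]].
  destruct (Hh R0 ltac:(lra)) as [B HB].
  exists (Rmax 1 (Rmax B (Cmod w))). split.
  - eapply Rlt_le_trans; [|apply Rmax_l]; lra.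
  - intros [|m].
    + eapply Rle_trans; [|apply Rmax_r]. apply Rmax_r.
    + rewrite Horb. eapply Rle_trans; [apply HB, Hbd|].
      eapply Rle_trans; [|apply Rmax_r]. apply Rmax_l.
Qed.

Lemma iter_commute (f g : C -> C) :
  (forall z, f (g z) = g (f z)) -> forall n z, iter f n (g z) = g (iter f n z).
Proof.
  intros Hcomm n z. induction n as [|n IH]; [reflexivity|].
  unfold iter in *. simpl. rewrite IH. apply Hcomm.
Qed.

Lemma orbit_semiconjugacy (f g P : C -> C) (z : C) :
  (forall z, f (g z) = g (f z)) -> (forall z, P (f z) = f (g z)) ->
  forall n, iter f (S n) (g z) = P (iter f (S n) z).
Proof.
  intros Hcomm HPf n.
  change (iter f (S n) (g z)) with (f (iter f n (g z))).
  rewrite iter_commute by exact Hcomm. rewrite <- HPf. reflexivity.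
Qed.

Theorem theorem5 (f g P : C -> C) (U : C -> Prop) :
  transcendental_entire f -> transcendental_entire g ->
  (forall z, f (g z) = g (f z)) ->
  poly_deg_ge2 P ->
  (forall z, P (f z) = f (g z)) ->
  (forall z, U z -> bungee f z) ->
  forall z, U (g z) -> bungee f z.
Proof.
  intros _ _ Hcomm [l [Hlen [Hlast HP]]] HPf HU z Hz.
  pose proof (orbit_semiconjugacy f g P z Hcomm HPf) as Horb.
  destruct (HU _ Hz) as [Hnot_esc Hnot_bd]. split.
  - intros Hesc. apply Hnot_esc. apply (escaping_transfer f P z _ Horb); [|exact Hesc].
    intros M. destruct (peval_tends_to_infinity l ltac:(lia) Hlast M) as [K HK].
    exists K. intros u Hu. rewrite HP. apply HK, Hu.
  - intros Hbd. apply Hnot_bd. apply (bounded_orbit_transfer f P z _ Horb); [|exact Hbd].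
    intros R0 HR0. destruct (peval_bounded l R0 HR0) as [B HB].
    exists B. intros u Hu. rewrite HP. apply HB, Hu.
Qed.
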